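(* There is a universal constant $c>0$ such that the following holds. Fix $0<\epsilon<1/8$. There exist a measurable space $\mathcal X$, a probability measure $\nu$ on $\mathcal X$ and a family $\mathcal U$ of probability measures on $\mathcal X$ such that for all $\mu\in\mathcal U$, $\nu\ll\mu$ and $\left\|\frac{d\nu}{d\mu}\right\|_\infty\le 4$, and such that the following holds. Any estimator $\widehat Z$ that, for every $\mu\in\mathcal U$ and every $Z>0$, given i.i.d. $X_1,\dots,X_n\sim\mu$ and the values $\lambda(X_i)$ of $\lambda=Z\cdot\frac{d\nu}{d\mu}$, satisfies $(1-\epsilon)Z\le\widehat Z\le(1+\epsilon)Z$ with probability at least $2/3$, must use $n\ge c/\epsilon^2$ samples.
   Context: An estimator is a measurable function of $(X_1,\dots,X_n,\lambda(X_1),\dots,\lambda(X_n))$ with no other access to $\mu$, $\lambda$ or $Z$. *)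

From HB Require Import structures.
From mathcomp Require Import all_boot all_order all_algebra.
From mathcomp Require Import all_classical all_reals all_analysis ess_sup_inf.
Set Implicit Arguments. Unset Strict Implicit. Unset Printing Implicit Defensive.
Import Order.TTheory GRing.Theory Num.Theory.
Local Open Scope classical_set_scope.
Local Open Scope ring_scope.

Section iid.
Context {d : measure_display} {T : measurableType d} {R : realType}.

(* Integral of f over n i.i.d. samples from mu, i.e. w.r.t. the n-fold
   product measure mu^{(x) n} on n.-tuple T, written as the iterated
   (Tonelli) integral  \int mu(dx_1) ... \int mu(dx_n) f (x_1,...,x_n). *)
Fixpoint iid_integral (mu : {measure set T -> \bar R}) (n : nat) :
    (n.-tuple T -> \bar R) -> \bar R :=
  match n return (n.-tuple T -> \bar R) -> \bar R with
  | 0 => fun f => f [tuple]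
  | n'.+1 => fun f =>
      (\int[mu]_x iid_integral mu (fun t : n'.-tuple T => f [tuple of x :: t]))%E
  end.

Definition iid_prob (mu : {measure set T -> \bar R}) (n : nat)
    (E : n.-tuple T -> bool) : \bar R :=
  iid_integral mu (fun t => ((E t)%:R)%:E).

(* f is a version of the Radon-Nikodym derivative d nu / d mu:
   f is measurable and nu(A) = \int_A f dmu for every measurable A. *)
Definition is_density (mu nu : {measure set T -> \bar R}) (f : T -> R) : Prop :=
  measurable_fun setT f /\
  forall A, measurable A -> nu A = (\int[mu]_(x in A) (f x)%:E)%E.

End iid.

From HB Require Import structures.
From mathcomp Require Import all_boot all_order all_algebra.
From mathcomp Require Import all_classical all_reals all_analysis ess_sup_inf.
From mathcomp Require Import ring lra.
Import Order.TTheory GRing.Theory Num.Theory.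
Local Open Scope classical_set_scope.
Local Open Scope ring_scope.

(* Le Cam's two-point method.  Take X = bool, nu = dirac true and
   U = {Bernoulli(1/2), Bernoulli(p)} with p = (1 + 4 eps) / 2, so that
   d nu / d mu = 1[x] / mu{true} <= 4.  For Z = mu{true} the observed weights
   lambda(X_i) = 1[X_i] are the samples themselves, and the accuracy windows
   around 1/2 and p are disjoint: an accurate estimator is a test g with
   E_{1/2} g >= 2/3 and E_p g <= 1/3.  By change of measure such a gap forces
   the second moment of the likelihood ratio, (1 + 16 eps^2)^n, to be at least
   1 + 1/9, whence n eps^2 >= 1/160. *)

Section bernoulli_tuples.
Context {R : realType}.
Implicit Types (p q : R) (n : nat).

Fixpoint bern_expect p n : (n.-tuple bool -> R) -> R :=
  match n return (n.-tuple bool -> R) -> R with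
  | 0 => fun g => g [tuple]
  | n'.+1 => fun g =>
      p * bern_expect p n' (fun t : n'.-tuple bool => g [tuple of true :: t]) +
      (1 - p) * bern_expect p n' (fun t : n'.-tuple bool => g [tuple of false :: t])
  end.
Arguments bern_expect p {n}.

Lemma eq_bern_expect p n (g h : n.-tuple bool -> R) :
  g =1 h -> bern_expect p g = bern_expect p h.
Proof. by move=> /funext->. Qed.

Lemma bern_expectD p n (g h : n.-tuple bool -> R) :
  bern_expect p (fun t => g t + h t) = bern_expect p g + bern_expect p h.
Proof.
elim: n g h => [|n IH] g h //=.
by rewrite (IH (fun t => g [tuple of true :: t])) (IH (fun t => g [tuple of false :: t])); ring.
Qed.

Lemma bern_expectZ p n a (g : n.-tuple bool -> R) :
  bern_expect p (fun t => a * g t) = a * bern_expect p g.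
Proof. by elim: n g => [|n IH] g //=; rewrite !IH; ring. Qed.

Lemma bern_expect_cst p n c : bern_expect p (fun _ : n.-tuple bool => c) = c.
Proof. by elim: n => [|n IH] //=; rewrite !IH; ring. Qed.

Lemma ler_bern_expect p n (g h : n.-tuple bool -> R) : 0 <= p <= 1 ->
  (forall t, g t <= h t) -> bern_expect p g <= bern_expect p h.
Proof.
move=> /andP[p0 p1]; elim: n g h => [|n IH] g h gh //=.
by rewrite lerD // ler_wpM2l ?subr_ge0 //; apply: IH.
Qed.

Definition lik_ratio p q n (t : n.-tuple bool) : R :=
  \prod_(x <- t) (if x then p / q else (1 - p) / (1 - q)).
Arguments lik_ratio p q {n}.

Lemma lik_ratio_cons p q n x (t : n.-tuple bool) :
  lik_ratio p q [tuple of x :: t] =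
  (if x then p / q else (1 - p) / (1 - q)) * lik_ratio p q t.
Proof. exact: big_cons. Qed.

Lemma lik_ratio_nil p q : lik_ratio p q [tuple] = 1.
Proof. exact: big_nil. Qed.

Section change_of_measure.
Variables (p q : R).
Hypotheses (q_neq0 : q != 0) (q_neq1 : 1 - q != 0).

Lemma bern_expect_change n (g : n.-tuple bool -> R) :
  bern_expect p g = bern_expect q (fun t => g t * lik_ratio p q t).
Proof.
elim: n g => [|n IH] g /=; first by rewrite lik_ratio_nil mulr1.
rewrite !IH.
under [in RHS]eq_bern_expect => t do rewrite lik_ratio_cons /= mulrCA.
under [in X in _ = _ + X]eq_bern_expect => t do rewrite lik_ratio_cons /= mulrCA.
by rewrite !bern_expectZ; field; rewrite q_neq0 q_neq1.
Qed.

Lemma bern_expect_lik_ratio n : bern_expect q (@lik_ratio p q n) = 1.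
Proof.
rewrite -[RHS](bern_expect_cst p n) bern_expect_change.
by apply: eq_bern_expect => t; rewrite mul1r.
Qed.

Lemma bern_expect_lik_ratio_sqr n :
  bern_expect q (fun t : n.-tuple bool => lik_ratio p q t ^+ 2) =
  (1 + (p - q) ^+ 2 / (q * (1 - q))) ^+ n.
Proof.
elim: n => [|n IH] /=; first by rewrite lik_ratio_nil expr1n.
under [in LHS]eq_bern_expect => t do rewrite lik_ratio_cons /= exprMn.
under [in X in _ + X]eq_bern_expect => t do rewrite lik_ratio_cons /= exprMn.
rewrite !bern_expectZ IH [RHS]exprS; field.
by rewrite q_neq0 q_neq1.
Qed.

Hypothesis q_ge0 : 0 <= q <= 1.

Lemma bern_expect_gap_sqr n (g : n.-tuple bool -> R) : (forall t, g t ^+ 2 <= 1) ->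
  1 + (bern_expect q g - bern_expect p g) ^+ 2 <=
  bern_expect q (fun t : n.-tuple bool => lik_ratio p q t ^+ 2).
Proof.
(* Integrate 2 gap g (1 - L) <= gap^2 g^2 + (1 - L)^2 under q; the change of
   measure turns the left-hand side into 2 gap^2. *)
move=> g_le1; set gap := bern_expect q g - bern_expect p g.
set L := @lik_ratio p q n.
have ineq : bern_expect q (fun t => 2 * gap * (g t + (-1) * (g t * L t))) <=
       bern_expect q (fun t => (gap ^+ 2 + 1) + (-2 * L t + L t ^+ 2)).
  apply: ler_bern_expect => // t.
  have := g_le1 t; have := sqr_ge0 (gap * g t - (1 - L t)).
  have := sqr_ge0 gap; nra.
move: ineq; rewrite !bern_expectZ !bern_expectD !bern_expectZ bern_expect_cst.
by rewrite bern_expect_lik_ratio -bern_expect_change bern_expect_cst mulN1r -/gap; nra.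
Qed.

End change_of_measure.
End bernoulli_tuples.
Arguments bern_expect {R} p {n}.
Arguments lik_ratio {R} p q {n}.

Lemma two_point_test_bound {R : realType} {p q a : R} {n} {g1 g2 : n.-tuple bool -> R} :
  0 <= p <= 1 -> 0 < q < 1 ->
  1 / 2 <= a -> (forall t, g1 t ^+ 2 <= 1) -> (forall t, g1 t + g2 t <= 1) ->
  a <= bern_expect q g1 -> a <= bern_expect p g2 ->
  1 + (2 * a - 1) ^+ 2 <= (1 + (p - q) ^+ 2 / (q * (1 - q))) ^+ n.
Proof.
move=> p01 /andP[q_gt0 q_lt1] a_ge g1_sqr g12 g1_ge g2_ge.
have q_neq0 : q != 0 by rewrite gt_eqF.
have q_neq1 : 1 - q != 0 by rewrite subr_eq0 eq_sym lt_eqF.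
have g1_le : bern_expect p g1 <= 1 - bern_expect p g2.
  rewrite -(bern_expect_cst p n 1) -mulN1r -bern_expectZ -bern_expectD.
  by apply: ler_bern_expect => // t; have := g12 t; lra.
have q_ge0 : 0 <= q <= 1 by apply/andP; split; lra.
rewrite -bern_expect_lik_ratio_sqr //.
apply: le_trans (bern_expect_gap_sqr p q q_neq0 q_neq1 q_ge0 n g1 g1_sqr).
by rewrite lerD2l ler_sqr ?nnegrE; lra.
Qed.

Section sample_size.
Context {R : realType}.

Lemma expr1D_mul_1B_le1 (x : R) n : 0 <= x -> (1 + x) ^+ n * (1 - n%:R * x) <= 1.
Proof.
move=> x_ge0; elim: n => [|n IH]; first by rewrite expr0 mul0r subr0 mul1r.
apply: le_trans IH; rewrite exprSr -mulrA.
apply: ler_wpM2l; first by apply: exprn_ge0; lra.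
have n_ge0 : 0 <= n%:R :> R by [].
rewrite -natr1; nra.
Qed.

Lemma mul_nat_ge_of_expr1D_ge {x a : R} {n} : 0 <= x -> 0 <= a ->
  1 + a <= (1 + x) ^+ n -> a <= (1 + a) * (n%:R * x).
Proof.
move=> x_ge0 a_ge0 pow_ge; have := expr1D_mul_1B_le1 x n x_ge0.
have : 0 <= n%:R * x by rewrite mulr_ge0.
nra.
Qed.

End sample_size.

Section bernoulli_density.
Context {R : realType}.
Variable q : R.
Hypothesis q01 : 0 < q <= 1.

Let q_ge0 : 0 <= q <= 1.
Proof. by case/andP: q01 => q_gt0 ->; rewrite ltW. Qed.

Lemma iid_integral_bernoulli n (g : n.-tuple bool -> R) : (forall t, 0 <= g t) ->
  iid_integral (bernoulli_prob q) (fun t => (g t)%:E) = (bern_expect q g)%:E.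
Proof.
elim: n g => [|n IH] g g_ge0 //=.
under eq_integral => x _ do rewrite IH //.
rewrite integral_bernoulli_prob // => x.
by rewrite lee_fin -(bern_expect_cst q n 0); apply: ler_bern_expect.
Qed.

Lemma iid_prob_bernoulli n (E : n.-tuple bool -> bool) :
  iid_prob (bernoulli_prob q) E = (bern_expect q (fun t => (E t)%:R))%:E.
Proof. by apply: iid_integral_bernoulli => t; case: (E t). Qed.

Definition bern_density (x : bool) : R := if x then q^-1 else 0.

Lemma bern_density_scale : (fun x => q * bern_density x) = fun x : bool => x%:R.
Proof.
by apply/funext => -[]; rewrite /bern_density /= ?mulr0 // mulfV // gt_eqF // (andP q01).1.
Qed.

Lemma dirac_true_dominated : \d_true `<< bernoulli_prob q.
Proof.
case/andP: q01 => q_gt0 q_le1; apply/null_content_dominatesP => A mA /=.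
rewrite bernoulli_probE // !diracE -!EFinM -EFinD => -[] h.
apply/congr1; move: h.
by case: (true \in A); case: (false \in A) => /=; rewrite /unstable.onem; lra.
Qed.

Lemma is_density_bern_density : is_density (bernoulli_prob q) \d_true bern_density.
Proof.
case/andP: q01 => q_gt0 q_le1; split => // A mA.
rewrite integral_mkcond integral_bernoulli_prob //; last first.
  by move=> [] /=; rewrite /patch; case: ifP; rewrite // lee_fin invr_ge0 ltW.
rewrite /patch /bern_density /= diracE.
by case: (true \in A); case: (false \in A); rewrite /= ?mule0 ?adde0 -?EFinM ?mulfV ?gt_eqF.
Qed.

Lemma ess_sup_bern_density :
  (ess_sup (bernoulli_prob q) (fun x => (bern_density x)%:E) <= q^-1%:E)%E.
Proof.
apply/ess_supP; apply: aeW => -[] //=.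
by rewrite lee_fin invr_ge0 ltW // (andP q01).1.
Qed.

End bernoulli_density.

Lemma bernoulli_bounded_density {R : realType} (q : R) : 1 / 4 <= q <= 1 ->
  \d_true `<< bernoulli_prob q /\
  exists f : bool -> R, is_density (bernoulli_prob q) \d_true f /\
    (ess_sup (bernoulli_prob q) (fun x => (f x)%:E) <= 4%:E)%E.
Proof.
case/andP=> q_ge q_le1; have q01 : 0 < q <= 1 by apply/andP; split; lra.
split; first exact: dirac_true_dominated.
exists (bern_density q); split; first exact: is_density_bern_density.
apply: le_trans (ess_sup_bern_density q q01) _.
by rewrite lee_fin invf_ple ?posrE; lra.
Qed.

Definition rel_approx {R : realType} (e Z z : R) : bool := (1 - e) * Z <= z <= (1 + e) * Z.

Lemma rel_approx_disjoint {R : realType} (e a b z : R) : (1 + e) * a < (1 - e) * b ->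
  (rel_approx e a z)%:R + (rel_approx e b z)%:R <= 1 :> R.
Proof.
move=> sep; rewrite /rel_approx.
case: (boolP (_ <= z <= _)) => [/andP[_ za]|_]; case: (boolP (_ <= z <= _)) => [/andP[bz _]|_];
  rewrite /= ?mulr1n ?mulr0n ?addr0 ?add0r //; lra.
Qed.

Theorem proposition12 (R : realType) :
  exists c : R, 0 < c /\
  forall eps : R, 0 < eps -> eps < 1 / 8 ->
  exists (d : measure_display) (T : measurableType d)
         (nu : probability T R) (U : set (probability T R)),
    (forall mu : probability T R, U mu ->
       nu `<< mu /\
       exists f : T -> R, is_density mu nu f /\
         (ess_sup mu (fun x => (f x)%:E) <= 4%:E)%E) /\
    forall (n : nat) (Zhat : n.-tuple T * n.-tuple R -> R),
      measurable_fun setT Zhat ->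
      (forall mu : probability T R, U mu ->
       forall Z : R, 0 < Z ->
       forall f : T -> R, is_density mu nu f ->
         ((2 / 3)%:E <=
            iid_prob mu (fun xs : n.-tuple T =>
              ((1 - eps) * Z <= Zhat (xs, map_tuple (fun x => Z * f x) xs)
                <= (1 + eps) * Z)%R))%E) ->
      c / eps ^+ 2 <= n%:R.
Proof.
exists (1 / 160); split; first lra.
move=> e e_gt0 e_lt; pose p : R := (1 + 4 * e) / 2.
have p_range : 1 / 4 <= p <= 1 by apply/andP; rewrite /p; split; lra.
have half_range : 1 / 4 <= (1 / 2 : R) <= 1 by apply/andP; split; lra.
pose U (mu : probability bool R) := mu = bernoulli_prob (1 / 2) \/ mu = bernoulli_prob p.
exists default_measure_display, bool, \d_true, U; split.
  by move=> _ [->|->]; apply: bernoulli_bounded_density.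
move=> n Zhat _ accurate.
pose success q (t : n.-tuple bool) : R :=
  (rel_approx e q (Zhat (t, map_tuple (fun x : bool => x%:R) t)))%:R.
have success_ge q : 1 / 4 <= q <= 1 -> U (bernoulli_prob q) ->
    2 / 3 <= bern_expect q (success q).
  case/andP=> q_ge q_le1 Uq; have q_gt0 : 0 < q by lra.
  have q01 : 0 < q <= 1 by rewrite q_gt0.
  have := accurate _ Uq q q_gt0 _ (is_density_bern_density q q01).
  by rewrite bern_density_scale // iid_prob_bernoulli -lee_fin.
have growth : 1 + (2 * (2 / 3) - 1) ^+ 2 <= (1 + 16 * e ^+ 2) ^+ n.
  have <- : (p - 1 / 2) ^+ 2 / (1 / 2 * (1 - 1 / 2)) = 16 * e ^+ 2 by rewrite /p; field.
  apply: two_point_test_bound (success_ge _ half_range (or_introl erefl))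
    (success_ge _ p_range (or_intror erefl)).
  - by apply/andP; rewrite /p; split; lra.
  - by apply/andP; split; lra.
  - lra.
  - by move=> t; rewrite /success; case: rel_approx; rewrite ?expr1n ?expr0n ?ler01.
  - by move=> t; apply: rel_approx_disjoint; rewrite /p; nra.
have rate := mul_nat_ge_of_expr1D_ge _ _ growth.
rewrite ler_pdivrMr ?exprn_gt0 //; nra.
Qed.
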